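(* Let $E$ be a real Hilbert space with $\dim(E)\ge2$, let $h\in E$ be a unit vector, and let $H^+=\{x\in E\mid (h,x)>0\}$. Define the relation $\preceq$ on $H^+$ by $x\preceq y \iff \|x-y_\perp\|\le y_h$. Then $(H^+,\preceq)$ is a cc sponge.
   Context: For $x\in E$, $x_h=(h,x)$ and $x_\perp=x-(h,x)h$. An orientation on a set $S$ is a reflexive, antisymmetric binary relation $\preceq$. For $P\subseteq S$, $P$ is right-bounded if there is $s\in S$ with $p\preceq s$ for all $p\in P$. An element $x$ is the join of $P$ if $p\preceq x$ for all $p\in P$ and $x\preceq y$ for every $y\in S$ with $p\preceq y$ for all $p\in P$. An oriented set $(S,\preceq)$ is a conditionally complete sponge (cc sponge) if every nonempty right-bounded subset of $S$ has a join. *)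

(* E is a complete normed module over R : realType
   whose norm is induced by an inner product, i.e. a real Hilbert space. *)
From HB Require Import structures.
From mathcomp Require Import all_boot all_order all_algebra.
From mathcomp Require Import all_classical all_reals all_analysis.
Set Implicit Arguments. Unset Strict Implicit. Unset Printing Implicit Defensive.
Import Order.TTheory GRing.Theory Num.Theory.
Import numFieldNormedType.Exports.
Local Open Scope ring_scope.

Definition inner_product_for (R : realType) (E : normedModType R)
  (ip : E -> E -> R) : Prop :=
  [/\ (forall x y, ip x y = ip y x),
      (forall (a : R) (x y z : E), ip (a *: x + y) z = a * ip x z + ip y z)
    & (forall x, `|x| ^+ 2 = ip x x)].

Definition dim_ge2 (R : realType) (E : normedModType R) : Prop :=
  exists x y : E, forall a b : R, a *: x + b *: y = 0 -> a = 0 /\ b = 0.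

Definition comp_h (R : realType) (E : normedModType R) (ip : E -> E -> R)
  (h x : E) : R := ip h x.
Definition comp_perp (R : realType) (E : normedModType R) (ip : E -> E -> R)
  (h x : E) : E := x - ip h x *: h.

Definition Hplus (R : realType) (E : normedModType R) (ip : E -> E -> R)
  (h : E) : E -> Prop := fun x => 0 < ip h x.

Definition cone_rel (R : realType) (E : normedModType R) (ip : E -> E -> R)
  (h : E) (x y : E) : Prop := `|x - comp_perp ip h y| <= comp_h ip h y.

Definition orientation (T : Type) (S : T -> Prop) (le : T -> T -> Prop) : Prop :=
  (forall x, S x -> le x x) /\
  (forall x y, S x -> S y -> le x y -> le y x -> x = y).

Definition right_bounded (T : Type) (S : T -> Prop) (le : T -> T -> Prop)
  (P : T -> Prop) : Prop :=
  exists s, S s /\ forall p, P p -> le p s.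

Definition is_join (T : Type) (S : T -> Prop) (le : T -> T -> Prop)
  (P : T -> Prop) (x : T) : Prop :=
  S x /\ (forall p, P p -> le p x) /\
  (forall y, S y -> (forall p, P p -> le p y) -> le x y).

Definition cc_sponge (T : Type) (S : T -> Prop) (le : T -> T -> Prop) : Prop :=
  orientation S le /\
  forall P : T -> Prop, (forall p, P p -> S p) -> (exists p, P p) ->
    right_bounded S le P -> exists x, is_join S le P x.

From HB Require Import structures.
From mathcomp Require Import all_boot all_order all_algebra.
From mathcomp Require Import all_classical all_reals all_analysis.
From mathcomp Require Import ring lra.
Import Order.TTheory GRing.Theory Num.Theory.
Import numFieldNormedType.Exports.
(* For y in H^+, x <= y says that x lies in the closed ball with centre y_perp
   in the hyperplane h^perp and radius y_h.  By the parallelogram law the squared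
   radius of a ball enclosing P is strongly convex in its centre, so by
   completeness the least one, m, is attained at some c0 in h^perp and every
   enclosing ball (c, r) satisfies m + |c0 - c|^2 <= r.  As
   |x - c|^2 = x_h^2 + |x_perp - c|^2 for c in h^perp, this inequality says
   exactly that c0 + sqrt m h lies below every upper bound of P: it is the join. *)

Set Implicit Arguments.
Unset Strict Implicit.
Unset Printing Implicit Defensive.

Local Open Scope ring_scope.
Local Open Scope classical_set_scope.

(* [r] is the squared radius. *)
Definition encloses {R : realType} {E : normedModType R}
    (P : set E) (c : E) (r : R) :=
  forall p, P p -> `|p - c| ^+ 2 <= r.

Section InnerProduct.
Context {R : realType} {E : normedModType R} (ip : E -> E -> R).
Hypothesis hip : inner_product_for ip.

Lemma ipC x y : ip x y = ip y x.
Proof. by case: hip. Qed.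

Lemma ipDZl a x y z : ip (a *: x + y) z = a * ip x z + ip y z.
Proof. by case: hip. Qed.

Lemma ip_normE x : `|x| ^+ 2 = ip x x.
Proof. by case: hip. Qed.

Lemma ip0l z : ip 0 z = 0.
Proof. by have := ipDZl 1 0 0 z; rewrite scale1r addr0 mul1r; lra. Qed.

Lemma ipDl x y z : ip (x + y) z = ip x z + ip y z.
Proof. by have := ipDZl 1 x y z; rewrite scale1r mul1r. Qed.

Lemma ipZl a x z : ip (a *: x) z = a * ip x z.
Proof. by rewrite -[a *: x]addr0 ipDZl ip0l addr0. Qed.

Lemma ipNl x z : ip (- x) z = - ip x z.
Proof. by rewrite -scaleN1r ipZl mulN1r. Qed.

Lemma ipDr x y z : ip z (x + y) = ip z x + ip z y.
Proof. by rewrite !(ipC z) ipDl. Qed.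

Lemma ipZr a x z : ip z (a *: x) = a * ip z x.
Proof. by rewrite !(ipC z) ipZl. Qed.

Lemma ipNr x z : ip z (- x) = - ip z x.
Proof. by rewrite !(ipC z) ipNl. Qed.

Lemma sqr_norm_sub_lerp (p c c' : E) (t : R) :
  `|p - ((1 - t) *: c + t *: c')| ^+ 2 =
  (1 - t) * `|p - c| ^+ 2 + t * `|p - c'| ^+ 2 - t * (1 - t) * `|c - c'| ^+ 2.
Proof.
rewrite !ip_normE !(ipNl, ipNr, ipDl, ipDr, ipZl, ipZr).
by rewrite (ipC c p) (ipC c' p) (ipC c' c); ring.
Qed.

Lemma encloses_lerp (P : set E) (c c' : E) (r r' t : R) : 0 <= t <= 1 ->
  encloses P c r -> encloses P c' r' ->
  encloses P ((1 - t) *: c + t *: c')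
    ((1 - t) * r + t * r' - t * (1 - t) * `|c - c'| ^+ 2).
Proof.
move=> /andP[t_ge0 t_le1] Pc Pc' p Pp; rewrite sqr_norm_sub_lerp lerB // lerD //.
  by rewrite ler_wpM2l ?subr_ge0 ?Pc.
by rewrite ler_wpM2l ?Pc'.
Qed.

End InnerProduct.

Section ChebyshevCenter.
Context {R : realType} {E : completeNormedModType R} (ip : E -> E -> R).
Hypothesis hip : inner_product_for ip.
Variable K : set E.
Hypothesis K_closed : closed K.
Hypothesis K_convex :
  forall c c' t, 0 <= t <= 1 -> K c -> K c' -> K ((1 - t) *: c + t *: c').
Variables (P : set E) (p0 c1 : E) (r1 : R).
Hypotheses (Pp0 : P p0) (K_c1 : K c1) (P_c1 : encloses P c1 r1).

Let radii := [set r | exists2 c, K c & encloses P c r].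
Let m := inf radii.

Lemma has_inf_radii : has_inf radii.
Proof.
split; first by exists r1, c1.
by exists 0 => r [c _ /(_ p0 Pp0)]; apply: le_trans; rewrite sqr_ge0.
Qed.

Lemma inf_radii_le c r : K c -> encloses P c r -> m <= r.
Proof. by move=> Kc Pc; apply: ge_inf (has_inf_radii).2 _ _; exists c. Qed.

Lemma sqr_dist_centers_le c c' r r' t : 0 <= t <= 1 -> K c -> K c' ->
  encloses P c r -> encloses P c' r' ->
  t * (1 - t) * `|c - c'| ^+ 2 <= (1 - t) * (r - m) + t * (r' - m).
Proof.
move=> t01 Kc Kc' Pc Pc'.
have := inf_radii_le (K_convex t01 Kc Kc') (encloses_lerp hip t01 Pc Pc').
lra.
Qed.

Lemma inf_radii_attained : exists2 c0, K c0 & encloses P c0 m.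
Proof.
have approx n : exists c, K c /\ encloses P c (m + harmonic n).
  have [r [c Kc Pc] r_lt] := inf_adherent (harmonic_gt0 n) has_inf_radii.
  by exists c; split=> // p Pp; apply: le_trans (Pc p Pp) (ltW r_lt).
have [cn /all_and2[Kcn Pcn]] := choice approx.
have cn_dist i j : `|cn i - cn j| ^+ 2 <= 2 * (harmonic i + harmonic j).
  have half01 : 0 <= (2^-1 : R) <= 1 by apply/andP; split; lra.
  have := sqr_dist_centers_le half01 (Kcn i) (Kcn j) (Pcn i) (Pcn j); lra.
have : cvg (cn @ \oo).
  apply/cauchy_cvgP/cauchy_exP => e e_gt0.
  have small : \forall n \near \oo, harmonic n <= e ^+ 2 / 8.
    by apply: cvgr_le _ cvg_harmonic _ _; rewrite divr_gt0 ?exprn_gt0.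
  near \oo => N; exists (cn N); rewrite nbhs_simpl /=.
  near=> n; rewrite -ball_normE /=.
  have sqr_lt : `|cn N - cn n| ^+ 2 < e ^+ 2.
    have := cn_dist N n; have : 0 < e ^+ 2 by rewrite exprn_gt0.
    have : harmonic N <= e ^+ 2 / 8 by near: N.
    have : harmonic n <= e ^+ 2 / 8 by near: n.
    lra.
  by move: sqr_lt; rewrite ltr_pXn2r ?nnegrE ?normr_ge0 ?(ltW e_gt0).
move=> /cvg_ex[c0 cn_c0]; exists c0.
  by apply: (closed_cvg K K_closed _ _ cn_c0); exact: nearW.
move=> p Pp.
have sqr_dist_cvg : `|p - cn n| ^+ 2 @[n --> \oo] --> `|p - c0| ^+ 2.
  exact: continuous_cvg _ (@exprn_continuous R 2 _)
    (cvg_norm (cvgB (cvg_cst p) cn_c0)).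
have radius_cvg : m + harmonic n @[n --> \oo] --> m.
  by rewrite -[X in _ --> X]addr0; apply: cvgD; [exact: cvg_cst | exact: cvg_harmonic].
by apply: (ler_cvg_to sqr_dist_cvg radius_cvg); apply: nearW => n; apply: Pcn.
Unshelve. all: by end_near.
Qed.

Lemma sqr_dist_to_optimal_le c0 c r : K c0 -> encloses P c0 m ->
  K c -> encloses P c r -> m + `|c0 - c| ^+ 2 <= r.
Proof.
move=> Kc0 Pc0 Kc Pc; rewrite addrC -lerBrDr.
have bound n : (1 - harmonic n) * `|c0 - c| ^+ 2 <= r - m.
  have t01 : 0 <= (harmonic n : R) <= 1.
    by rewrite harmonic_ge0 /= invf_le1 ?ler1n.
  have := sqr_dist_centers_le t01 Kc0 Kc Pc0 Pc.
  by rewrite subrr mulr0 add0r -mulrA ler_pM2l ?harmonic_gt0.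
have shrink_cvg :
    (1 - harmonic n) * `|c0 - c| ^+ 2 @[n --> \oo] --> `|c0 - c| ^+ 2.
  rewrite -[X in _ --> X]mul1r; apply: cvgMr_tmp.
  by rewrite -[X in _ --> X]subr0; apply: cvgB; [exact: cvg_cst | exact: cvg_harmonic].
by apply: (ler_cvg_to shrink_cvg (cvg_cst (r - m))); exact: nearW.
Qed.

Lemma chebyshev_center : exists c0 m, [/\ K c0, encloses P c0 m &
  forall c r, K c -> encloses P c r -> m + `|c0 - c| ^+ 2 <= r].
Proof.
have [c0 Kc0 Pc0] := inf_radii_attained.
by exists c0, m; split=> // c r; apply: sqr_dist_to_optimal_le.
Qed.

End ChebyshevCenter.

Section ConeOrder.
Context {R : realType} {E : normedModType R} (ip : E -> E -> R).
Hypothesis hip : inner_product_for ip.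
Variable h : E.
Hypothesis h_unit : `|h| = 1.

Local Notation hcomp := (comp_h ip h).
Local Notation perp := (comp_perp ip h).

Lemma ip_hh : ip h h = 1.
Proof. by rewrite -(ip_normE hip) h_unit expr1n. Qed.

Lemma comp_h_perp y : hcomp (perp y) = 0.
Proof.
by rewrite /comp_h /comp_perp (ipDr hip) (ipNr hip) (ipZr hip) ip_hh mulr1 subrr.
Qed.

Lemma comp_h_orthoD c a : hcomp c = 0 -> hcomp (c + a *: h) = a.
Proof. by rewrite /comp_h (ipDr hip) (ipZr hip) ip_hh mulr1 => ->; rewrite add0r. Qed.

Lemma comp_perp_orthoD c a : hcomp c = 0 -> perp (c + a *: h) = c.
Proof. by move=> c_h; rewrite /comp_perp -/(comp_h ip h _) comp_h_orthoD ?addrK. Qed.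

Lemma sqr_norm_sub_ortho x c : hcomp c = 0 ->
  `|x - c| ^+ 2 = hcomp x ^+ 2 + `|perp x - c| ^+ 2.
Proof.
rewrite /comp_h /comp_perp => c_h.
rewrite !(ip_normE hip) !(ipNl hip, ipNr hip, ipDl hip, ipDr hip, ipZl hip, ipZr hip).
by rewrite ip_hh c_h (ipC hip c h) c_h (ipC hip x h) (ipC hip c x); ring.
Qed.

Lemma norm_comp_h_le x : `|hcomp x| <= `|x|.
Proof.
have zero_h : hcomp (0 : E) = 0 by rewrite /comp_h (ipC hip) (ip0l hip).
have := sqr_norm_sub_ortho x zero_h; rewrite !subr0 => sqr_eq.
rewrite -(ler_pXn2r (n := 2)) ?nnegrE // real_normK ?num_real //.
by rewrite sqr_eq lerDl sqr_ge0.
Qed.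

Lemma continuous_comp_h : continuous hcomp.
Proof.
move=> x; apply/cvgrPdist_lt => e e_gt0; near=> y.
rewrite /comp_h -(ipNr hip) -(ipDr hip).
apply: le_lt_trans (norm_comp_h_le _) _; near: y.
exact: cvgr_dist_lt.
Unshelve. all: by end_near.
Qed.

Lemma closed_ortho : closed [set c | hcomp c = 0].
Proof.
apply: (@preimage_closed _ _ hcomp [set a | a = 0]); last exact: closed_eq.
by move=> x _; exact: continuous_comp_h.
Qed.

Lemma convex_ortho c c' t :
  hcomp c = 0 -> hcomp c' = 0 -> hcomp ((1 - t) *: c + t *: c') = 0.
Proof. by rewrite /comp_h (ipDr hip) !(ipZr hip) => -> ->; rewrite !mulr0 addr0. Qed.

Lemma cone_relE x y : 0 <= hcomp y ->
  cone_rel ip h x y <-> `|x - perp y| ^+ 2 <= hcomp y ^+ 2.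
Proof. by move=> y_h_ge0; rewrite /cone_rel ler_pXn2r ?nnegrE. Qed.

Lemma cone_rel_refl x : Hplus ip h x -> cone_rel ip h x x.
Proof.
move=> /ltW x_h_ge0; apply/cone_relE => //.
by rewrite sqr_norm_sub_ortho ?comp_h_perp // subrr normr0 expr0n addr0.
Qed.

Lemma cone_rel_antisym x y : Hplus ip h x -> Hplus ip h y ->
  cone_rel ip h x y -> cone_rel ip h y x -> x = y.
Proof.
move=> /ltW x_h_ge0 /ltW y_h_ge0.
move=> /(cone_relE _ y_h_ge0) le_xy /(cone_relE _ x_h_ge0) le_yx.
rewrite sqr_norm_sub_ortho ?comp_h_perp // in le_xy.
rewrite sqr_norm_sub_ortho ?comp_h_perp // distrC in le_yx.
have perp_dist0 : `|perp x - perp y| ^+ 2 = 0.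
  by apply/eqP; rewrite eq_le sqr_ge0 andbT; lra.
have x_h_eq : hcomp x = hcomp y.
  by apply/eqP; rewrite -(eqrXn2 (n := 2)) //; apply/eqP; lra.
move/eqP: perp_dist0; rewrite sqrf_eq0 normr_eq0 subr_eq0 => /eqP perp_eq.
have decomp z : z = perp z + hcomp z *: h by rewrite /comp_perp subrK.
by rewrite [LHS]decomp [RHS]decomp perp_eq x_h_eq.
Qed.

Lemma orientation_cone_rel : orientation (Hplus ip h) (cone_rel ip h).
Proof. by split; [exact: cone_rel_refl | exact: cone_rel_antisym]. Qed.

Lemma encloses_of_upper_bound (P : set E) y : Hplus ip h y ->
  (forall p, P p -> cone_rel ip h p y) -> encloses P (perp y) (hcomp y ^+ 2).
Proof. by move=> /ltW y_h_ge0 ub p /ub /cone_relE; apply. Qed.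

Lemma chebyshev_lift_is_join (P : set E) c0 m : hcomp c0 = 0 -> 0 < m ->
  encloses P c0 m ->
  (forall c r, hcomp c = 0 -> encloses P c r -> m + `|c0 - c| ^+ 2 <= r) ->
  is_join (Hplus ip h) (cone_rel ip h) P (c0 + Num.sqrt m *: h).
Proof.
move=> c0_h m_gt0 P_c0 c0_min; set x := c0 + _.
have x_h : hcomp x = Num.sqrt m by exact: comp_h_orthoD.
have x_perp : perp x = c0 by exact: comp_perp_orthoD.
have sqrt_m_ge0 : 0 <= Num.sqrt m := sqrtr_ge0 m.
have sqr_sqrt_m : Num.sqrt m ^+ 2 = m := sqr_sqrtr (ltW m_gt0).
split; [|split].
- by rewrite /Hplus -/(comp_h _ _ _) x_h sqrtr_gt0.
- by move=> p Pp; apply/cone_relE; rewrite x_h ?x_perp ?sqr_sqrt_m //; exact: P_c0.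
- move=> y /[dup] y_pos /ltW y_h_ge0 ub; apply/cone_relE => //.
  rewrite sqr_norm_sub_ortho ?comp_h_perp // x_h x_perp sqr_sqrt_m.
  exact: c0_min (comp_h_perp y) (encloses_of_upper_bound y_pos ub).
Qed.

End ConeOrder.

Theorem mainTheorem2 (R : realType) (E : completeNormedModType R)
  (ip : E -> E -> R) (hip : inner_product_for ip) (hdim : dim_ge2 E)
  (h : E) (hunit : `|h| = 1) :
  cc_sponge (Hplus ip h) (cone_rel ip h).
Proof.
split; first exact: orientation_cone_rel.
move=> P P_pos [p0 Pp0] [s [s_pos s_ub]].
have convex_ortho_h c c' t (_ : 0 <= t <= 1) := @convex_ortho _ _ _ hip h c c' t.
have [c0 [m [c0_h P_c0 c0_min]]] := chebyshev_center hip (closed_ortho hip hunit)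
  convex_ortho_h Pp0 (comp_h_perp hip hunit s) (encloses_of_upper_bound s_pos s_ub).
have m_gt0 : 0 < m.
  apply: lt_le_trans (P_c0 p0 Pp0); rewrite (sqr_norm_sub_ortho hip hunit) //.
  exact: ltr_pwDl (exprn_gt0 _ (P_pos p0 Pp0)) (sqr_ge0 _).
by exists (c0 + Num.sqrt m *: h); apply: chebyshev_lift_is_join.
Qed.
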